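(* For all $n\ge 2$, $|F_n(321,2134)|=n^2-3n+4$.
   Context: A permutation $\pi$ avoids a classical pattern $p\in S_k$ if no subsequence of $\pi$ of length $k$ is order-isomorphic to $p$. A Fishburn permutation is a permutation $\pi=\pi_1\cdots\pi_n$ of $[n]$ for which there are no indices $i<j$ with $\pi_j<\pi_i<\pi_{i+1}$ and $\pi_i=\pi_j+1$. $F_n(\sigma_1,\dots,\sigma_k)$ denotes the set of Fishburn permutations of length $n$ avoiding each of the classical patterns $\sigma_1,\dots,\sigma_k$. *)

From mathcomp Require Import all_boot all_order all_fingroup.
Set Implicit Arguments. Unset Strict Implicit. Unset Printing Implicit Defensive.

(* Permutations of [n] are {perm 'I_n}; positions and values are 0-based
   (the shift by one does not affect any of the conditions below). *)

Definition fishburn n (s : {perm 'I_n}) : bool :=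
  ~~ [exists i : 'I_n, exists j : 'I_n, exists k : 'I_n,
        [&& i < j, (k : nat) == i.+1,
            s j < s i, s i < s k
          & (s i : nat) == (s j).+1]].

(* s contains the classical pattern p, given in one-line notation as the
   sequence of its values p_1 ... p_k (a permutation of 1..k): there are
   positions f 0 < f 1 < ... < f (k-1) with s (f a) < s (f b) iff p_a < p_b. *)
Definition contains n (s : {perm 'I_n}) (p : seq nat) : bool :=
  [exists f : {ffun 'I_(size p) -> 'I_n},
     [forall a : 'I_(size p), forall b : 'I_(size p),
        ((a < b) ==> (f a < f b)) &&
        ((s (f a) < s (f b)) == (nth 0 p a < nth 0 p b))]].

Definition avoids n (s : {perm 'I_n}) (p : seq nat) : bool := ~~ contains s p.

Definition F_321_2134 n : {set {perm 'I_n}} :=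
  [set s | [&& fishburn s, avoids s [:: 3; 2; 1] & avoids s [:: 2; 1; 3; 4]]].

From mathcomp Require Import all_boot all_order all_fingroup.
From mathcomp Require Import zify.
Set Implicit Arguments. Unset Strict Implicit. Unset Printing Implicit Defensive.

(* If h is not the identity, let m be its first non-fixed point.
   Fishburn-ness forces h (m+1) = m; avoiding 2134 forces the values above h m to
   appear in decreasing order after m+1, so 321-avoidance leaves at most two of
   them: h m is n-1, n-2 or n-3.  An induction then pins down every other entry,
   and h is one of three families
     A(m)   : m -> n-1, the later entries shifted down by one   (n of them),
     B(m,t) : m -> n-2, t -> n-1                       ((n-2)(n-1)/2 of them),
     C(m,t) : m -> n-3, t -> n-1, last entry n-2        ((n-3)(n-2)/2 of them),
   coded injectively by 'I_n + 'I_(n-2) * 'I_(n-2), a set of n + (n-2)^2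
   elements.  Conversely every family member is a Fishburn permutation avoiding
   321 and 2134, by a common structural criterion ([shaped]). *)

Definition avoid321 n (F : nat -> nat) : Prop :=
  forall i j k, i < j -> j < k -> k < n -> ~ (F k < F j /\ F j < F i).

Definition avoid2134 n (F : nat -> nat) : Prop :=
  forall i j k l, i < j -> j < k -> k < l -> l < n ->
    ~ (F j < F i /\ F i < F k /\ F k < F l).

Definition fishburn_fn n (F : nat -> nat) : Prop :=
  forall i j, i < j -> j < n -> ~ (F j < F i /\ F i < F i.+1 /\ F i = (F j).+1).

Section Translation.
Variables (n : nat) (s : {perm 'I_n}) (F : nat -> nat).
Hypothesis sF : forall i : 'I_n, F i = s i.

Let sFo i (iN : i < n) : F i = s (Ordinal iN) := sF (Ordinal iN).

Lemma avoid321P : avoids s [:: 3; 2; 1] <-> avoid321 n F.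
Proof.
split=> [A i j k ij jk kn | H].
- have jn : j < n by lia. have iN : i < n by lia.
  rewrite (sFo iN) (sFo jn) (sFo kn) => -[h1 h2].
  move/negP: A; apply; apply/existsP.
  exists [ffun a : 'I_3 => nth (Ordinal iN) [:: Ordinal iN; Ordinal jn; Ordinal kn] a].
  apply/forallP => a; apply/forallP => b; rewrite !ffunE.
  by case: a => [[|[|[|a]]] Ha]; case: b => [[|[|[|b]]] Hb] //=; lia.
- apply/negP => /existsP [f /forallP Hf].
  have P a b := forallP (Hf a) b.
  pose o0 : 'I_3 := @Ordinal 3 0 isT. pose o1 : 'I_3 := @Ordinal 3 1 isT.
  pose o2 : 'I_3 := @Ordinal 3 2 isT.
  have := P o0 o1; have := P o1 o2; have := P o1 o0; have := P o2 o1.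
  have := H (f o0) (f o1) (f o2); rewrite !sF /=; have := ltn_ord (f o2).
  move: (f o0) (f o1) (f o2) => a b c; lia.
Qed.

Lemma avoid2134P : avoids s [:: 2; 1; 3; 4] <-> avoid2134 n F.
Proof.
split=> [A i j k l ij jk kl ln | H].
- have kn : k < n by lia. have jn : j < n by lia. have iN : i < n by lia.
  rewrite (sFo iN) (sFo jn) (sFo kn) (sFo ln) => -[h1 [h2 h3]].
  move/negP: A; apply; apply/existsP.
  exists [ffun a : 'I_4 => nth (Ordinal iN) [:: Ordinal iN; Ordinal jn; Ordinal kn; Ordinal ln] a].
  apply/forallP => a; apply/forallP => b; rewrite !ffunE.
  by case: a => [[|[|[|[|a]]]] Ha]; case: b => [[|[|[|[|b]]]] Hb] //=; lia.
- apply/negP => /existsP [f /forallP Hf].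
  have P a b := forallP (Hf a) b.
  pose o0 : 'I_4 := @Ordinal 4 0 isT. pose o1 : 'I_4 := @Ordinal 4 1 isT.
  pose o2 : 'I_4 := @Ordinal 4 2 isT. pose o3 : 'I_4 := @Ordinal 4 3 isT.
  have := P o0 o1; have := P o1 o2; have := P o2 o3; have := P o1 o0; have := P o0 o2.
  have := H (f o0) (f o1) (f o2) (f o3); rewrite !sF /=; have := ltn_ord (f o3).
  move: (f o0) (f o1) (f o2) (f o3) => a b c d; lia.
Qed.

Lemma fishburnP : fishburn s <-> fishburn_fn n F.
Proof.
split=> [A i j ij jn | H].
- have iN : i < n by lia. have i1n : i.+1 < n by lia.
  rewrite (sFo iN) (sFo jn) (sFo i1n) => -[h1 [h2 h3]].
  move/negP: A; apply; apply/existsP; exists (Ordinal iN); apply/existsP; exists (Ordinal jn).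
  by apply/existsP; exists (Ordinal i1n); apply/and5P; split => //=; apply/eqP.
- apply/negP => /existsP [i /existsP [j /existsP [k /and5P [ij /eqP ki h3 h4 /eqP h5]]]].
  have := H i j ij (ltn_ord j); rewrite -ki !sF; lia.
Qed.

End Translation.

(* The value function of a permutation (extended by 0 beyond n). *)
Definition perm_fun n (s : {perm 'I_n}) (i : nat) : nat :=
  if insub i is Some o then val (s o) else 0.

Section PermFun.
Variables (n : nat) (s : {perm 'I_n}).

Lemma perm_funE (i : 'I_n) : perm_fun s i = s i.
Proof. by rewrite /perm_fun valK. Qed.

Lemma perm_fun_range i : i < n -> perm_fun s i < n.
Proof. by move=> iN; rewrite (perm_funE (Ordinal iN)). Qed.

Lemma perm_fun_inj i j : i < n -> j < n -> perm_fun s i = perm_fun s j -> i = j.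
Proof.
move=> iN jN; rewrite (perm_funE (Ordinal iN)) (perm_funE (Ordinal jN)).
by move/val_inj/perm_inj/(congr1 val).
Qed.

Lemma perm_fun_surj v : v < n -> exists2 j, j < n & perm_fun s j = v.
Proof. by move=> vN; exists ((s^-1)%g (Ordinal vN)); rewrite ?perm_funE ?permKV. Qed.

End PermFun.

(* The permutation of 'I_n with value function F, for F a bijection of [0, n). *)
Definition perm_of_fun n (F : nat -> nat) : {perm 'I_n} :=
  insubd (1%g : {perm 'I_n}) ([ffun i : 'I_n => insubd i (F i)] : {ffun 'I_n -> 'I_n}).

Lemma perm_of_funE n (F : nat -> nat) :
  (forall i, i < n -> F i < n) -> (forall i j, i < n -> j < n -> F i = F j -> i = j) ->
  forall i : 'I_n, F i = perm_of_fun n F i.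
Proof.
move=> F_range F_inj i.
have insubdE (x : 'I_n) : val (insubd x (F x)) = F x by rewrite val_insubd F_range.
have inj : injectiveb [ffun i : 'I_n => insubd i (F i)].
  apply/injectiveP => x y; rewrite !ffunE => /(congr1 val); rewrite !insubdE.
  by move/F_inj => xy; apply: val_inj; apply: xy.
by rewrite /perm_of_fun -pvalE val_insubd inj ffunE insubdE.
Qed.

(* A bijection of [0, n) whose inversions all start at the pivot m or at the
   peak t >= m, where F t = n - 1 is the largest value, and whose values above
   F m decrease after m: the common shape of the three families. *)
Record shaped n (F : nat -> nat) (m t : nat) : Prop := Shaped {
  shaped_range : forall i, i < n -> F i < n;
  shaped_inj : forall i j, i < n -> j < n -> F i = F j -> i = j;
  shaped_inversions : forall i j, i < j -> j < n -> F j < F i -> i = m \/ i = t;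
  shaped_decreasing : forall k l, m < k -> k < l -> l < n ->
    F m < F k -> F m < F l -> F l < F k;
  shaped_pivot_peak : m <= t;
  shaped_peak_lt : t < n;
  shaped_peak : F t = n - 1;
  shaped_fishburn : fishburn_fn n F }.

Section Shaped.
Variables (n : nat) (F : nat -> nat) (m t : nat).
Hypothesis FS : shaped n F m t.

(* A 321 needs inversions starting at i < j, i.e. at m and t, but no value lies
   above F t. *)
Lemma shaped_avoid321 : avoid321 n F.
Proof.
case: FS => range _ inv _ mt tn Ft _ i j k ij jk kn [h1 h2].
have := range m ltac:(lia).
by case: (inv i j ij ltac:(lia) h2) => ?; case: (inv j k jk kn h1) => ?; subst; lia.
Qed.

(* In a 2134 the first inversion cannot start at the maximum F t, so it starts at
   m; then the last two entries lie above F m and must decrease. *)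
Lemma shaped_avoid2134 : avoid2134 n F.
Proof.
case: FS => range _ inv dec mt tn Ft _ i j k l ij jk kl ln [h1 [h2 h3]].
have := range k ltac:(lia); have := range l ln.
case: (inv i j ij ltac:(lia) h1) => ?; subst; last lia.
by have := dec k l ltac:(lia) kl ln; lia.
Qed.

End Shaped.

Definition famA n m i := if i < m then i else if i == m then n - 1 else i - 1.
Definition famB n m t i :=
  if i < m then i else if i == m then n - 2 else if i < t then i - 1
  else if i == t then n - 1 else i - 2.
Definition famC n m t i :=
  if i < m then i else if i == m then n - 3 else if i < t then i - 1
  else if i == t then n - 1 else if i == n - 1 then n - 2 else i - 2.

Ltac case_ifs :=
  repeat match goal with
  | |- context [if ?b then _ else _] => case: (boolP b) => ?; try (exfalso; lia)
  end.

Ltac solve_family :=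
  constructor; unfold fishburn_fn; intros; unfold famA, famB, famC in *;
  repeat match goal with H : context [if _ then _ else _] |- _ => revert H end;
  case_ifs; lia.

Lemma famA_shaped n m : m < n -> shaped n (famA n m) m m.
Proof. move=> mn; solve_family. Qed.

Lemma famB_shaped n m t : m + 2 <= t -> t <= n - 1 -> shaped n (famB n m t) m t.
Proof. move=> mt tn; solve_family. Qed.

Lemma famC_shaped n m t : m + 2 <= t -> t <= n - 2 -> shaped n (famC n m t) m t.
Proof. move=> mt tn; solve_family. Qed.

(* Codes: inl m codes A(m); inr (a, b) codes B(a, b+2) if a <= b and C(b, a+1)
   otherwise, which exhausts the admissible pairs (m, t) of both families. *)
Definition code n := ('I_n + 'I_(n - 2) * 'I_(n - 2))%type.

Definition pivot n (x : code n) : nat :=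
  match x with inl m => m | inr (a, b) => if a <= b then a else b end.

Definition peak n (x : code n) : nat :=
  match x with inl m => m | inr (a, b) => if a <= b then b + 2 else a + 1 end.

Definition fam n (x : code n) : nat -> nat :=
  match x with
  | inl m => famA n m
  | inr (a, b) => if a <= b then famB n a (b + 2) else famC n b (a + 1)
  end.

Lemma fam_shaped n (x : code n) : shaped n (fam x) (pivot x) (peak x).
Proof.
case: x => [m | [a b]] /=; first exact: famA_shaped.
have := ltn_ord a; have := ltn_ord b.
by case: ifP => ab *; [apply: famB_shaped | apply: famC_shaped]; lia.
Qed.

Lemma fam_fixed n (x : code n) i : i < pivot x -> fam x i = i.
Proof.
by case: x => [m | [a b]] /=; [|case: ifP] => *; rewrite /famA /famB /famC; case_ifs; lia.
Qed.

Lemma fam_moves n (x : code n) : pivot x < n - 1 -> pivot x < fam x (pivot x).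
Proof.
case: x => [m | [a b]] /=; [|have := ltn_ord a; have := ltn_ord b; case: ifP] => *;
  by rewrite /famA /famB /famC; case_ifs; lia.
Qed.

Lemma first_moved_eq n (F G : nat -> nat) m1 m2 :
  m1 < n -> m2 < n ->
  (forall i, i < m1 -> F i = i) -> (forall i, i < m2 -> G i = i) ->
  (m1 < n - 1 -> m1 < F m1) -> (m2 < n - 1 -> m2 < G m2) ->
  (forall i, i < n -> F i = G i) -> m1 = m2.
Proof.
move=> m1n m2n Ffix Gfix Fmv Gmv FG.
case: (ltngtP m1 m2) => // [lt|gt].
- by have := FG m1 m1n; rewrite Gfix //; have := Fmv ltac:(lia); lia.
- by have := FG m2 m2n; rewrite Ffix //; have := Gmv ltac:(lia); lia.
Qed.

(* The coding is injective: equal functions have the same pivot and the same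
   peak (position of n - 1), and the value at the pivot tells the family. *)
Lemma fam_inj n (x y : code n) : (forall i, i < n -> fam x i = fam y i) -> x = y.
Proof.
move=> E; have Sx := fam_shaped x; have Sy := fam_shaped y.
have pivotx := leq_ltn_trans (shaped_pivot_peak Sx) (shaped_peak_lt Sx).
have pivoty := leq_ltn_trans (shaped_pivot_peak Sy) (shaped_peak_lt Sy).
have pivotE : pivot x = pivot y.
  exact: first_moved_eq pivotx pivoty (@fam_fixed n x) (@fam_fixed n y)
           (@fam_moves n x) (@fam_moves n y) E.
have peakE : peak x = peak y.
  apply: (shaped_inj Sy (shaped_peak_lt Sx) (shaped_peak_lt Sy)).
  by rewrite -E ?(shaped_peak Sx) ?(shaped_peak Sy) ?(shaped_peak_lt Sx).
(* Mixed cases are refuted by the values n-1, n-2, n-3 at the common pivot;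
   within a family, pivot and peak determine the code. *)
have := E _ pivotx; rewrite {2}pivotE.
move: pivotE peakE; case: x {E Sx pivotx} => [m | [a b]].
all: case: y {Sy pivoty} => [m' | [a' b']] /=.
all: try (have := ltn_ord a; have := ltn_ord b); try (have := ltn_ord a'; have := ltn_ord b').
all: try case: ifP; try case: ifP; rewrite /famA /famB /famC; case_ifs; move=> *.
all: unfold code; first [ lia | by congr inl; apply: ord_inj
                         | by congr (inr (_, _)); apply: ord_inj; lia ].
Qed.

Lemma famB_code n m t : m + 2 <= t <= n - 1 -> exists x : code n, fam x = famB n m t.
Proof.
case/andP => mt tn; have a_lt : m < n - 2 by lia. have b_lt : t - 2 < n - 2 by lia.
exists (inr (Ordinal a_lt, Ordinal b_lt)) => /=.
by rewrite ifT ?subnK //; lia.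
Qed.

Lemma famC_code n m t : m + 2 <= t <= n - 2 -> exists x : code n, fam x = famC n m t.
Proof.
case/andP => mt tn; have a_lt : t - 1 < n - 2 by lia. have b_lt : m < n - 2 by lia.
exists (inr (Ordinal a_lt, Ordinal b_lt)) => /=.
by rewrite ifF ?subnK //; lia.
Qed.

Section Classification.
Variables (n : nat) (h : nat -> nat).
Hypothesis h_range : forall i, i < n -> h i < n.
Hypothesis h_inj : forall i j, i < n -> j < n -> h i = h j -> i = j.
Hypothesis h_surj : forall v, v < n -> exists2 j, j < n & h j = v.
Hypothesis h_321 : avoid321 n h.
Hypothesis h_2134 : avoid2134 n h.
Hypothesis h_fish : fishburn_fn n h.

Section Pivot.
Variable m : nat.
Hypothesis m_lt : m < n.
Hypothesis fixed_below : forall i, i < m -> h i = i.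
Hypothesis m_moved : h m != m.

(* Values below m are taken by the fixed points, so h j >= m for j >= m. *)
Lemma values_from_pivot j : m <= j -> j < n -> m <= h j.
Proof.
move=> mj jn; rewrite leqNgt; apply/negP => hj.
by have := h_inj (h_range jn) jn (fixed_below hj); lia.
Qed.

Lemma pivot_up : m < h m.
Proof. by have := values_from_pivot (leqnn m) m_lt; move: m_moved; lia. Qed.

(* Fishburn at (m, position of h m - 1) gives h (m+1) < h m; then 321-avoidance
   rules out h (m+1) > m, so h (m+1) = m. *)
Lemma after_pivot : m.+1 < n /\ h m.+1 = m.
Proof.
have up := pivot_up; have top := h_range m_lt.
have [q qn hq] := @h_surj (h m - 1) ltac:(lia).
have mq : m < q.
  case: (ltngtP q m) => // [qm | qm]; last by subst q; lia.
  by have := fixed_below qm; lia.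
have m1n : m.+1 < n by lia.
have below : h m.+1 < h m.
  case: (ltngtP (h m.+1) (h m)) => // [gt | e].
  - by case: (h_fish mq qn); rewrite hq; lia.
  - by have := h_inj m1n m_lt e; lia.
split=> //; case: (ltngtP (h m.+1) m) => // [lt | gt].
  by have := values_from_pivot (leqnSn m) m1n; lia.
have [r rn hr] := h_surj m_lt.
case: (ltngtP r m.+1) => [rm | rm | rm]; last by subst r; lia.
- case: (ltngtP r m) => [rm' | rm' | rm']; last by subst r; lia.
  + by have := fixed_below rm'; lia.
  + by lia.
- by case: (h_321 (ltnSn m) rm rn); rewrite hr.
Qed.

Lemma big_late q : q < n -> h m < h q -> m.+1 < q.
Proof.
move=> qn hq; have [m1n hm1] := after_pivot; have up := pivot_up.
case: (ltngtP q m.+1) => // [qm | qm]; last by subst q; lia.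
case: (ltngtP q m) => [qm' | qm' | qm']; last by subst q; lia.
- by have := fixed_below qm'; lia.
- by lia.
Qed.

(* After m + 1 the values larger than h m decrease: otherwise 2134 at m, m+1. *)
Lemma big_decreasing k l : m.+1 < k -> k < l -> l < n ->
  h m < h k -> h m < h l -> h l < h k.
Proof.
move=> mk kl ln hk hl; have [m1n hm1] := after_pivot; have up := pivot_up.
case: (ltngtP (h l) (h k)) => // [lt | e].
- by case: (h_2134 (ltnSn m) mk kl ln); rewrite hm1; lia.
- by have := h_inj ln (ltn_trans kl ln) e; lia.
Qed.

Lemma big_positions q q' : q < n -> q' < n -> h m < h q -> h q < h q' -> q' < q.
Proof.
move=> qn q'n hq hqq'; have mq := big_late qn hq.
case: (ltngtP q' q) => // [qq' | e]; last by subst q'; lia.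
by have := big_decreasing mq qq' q'n hq ltac:(lia); lia.
Qed.

(* Three values above h m would form a 321, so h m >= n - 3. *)
Lemma pivot_large : n - 3 <= h m.
Proof.
rewrite leqNgt; apply/negP => small.
have [q1 q1n h1] := @h_surj (h m + 1) ltac:(lia).
have [q2 q2n h2] := @h_surj (h m + 2) ltac:(lia).
have [q3 q3n h3] := @h_surj (h m + 3) ltac:(lia).
have q21 := big_positions q1n q2n ltac:(lia) ltac:(lia).
have q32 := big_positions q2n q3n ltac:(lia) ltac:(lia).
by case: (h_321 q32 q21 q1n); lia.
Qed.

Lemma before_pivot_next j : j < m.+1 -> h j < m \/ h m <= h j.
Proof.
rewrite ltnS leq_eqVlt => /orP [/eqP -> | jm]; first by right.
by left; rewrite fixed_below.
Qed.

(* The inductive core: on a window [l, r) of positions carrying values below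
   h m, h i = i - d, provided the values [m, l - d) all occur before l and no
   earlier position carries a value in [l - d, h m).  A smaller h i would repeat
   an earlier value; a larger one leaves i - d to a later position, creating a
   321 with m and i. *)
Lemma shift_segment l r d : m.+1 <= l -> m + d <= l -> r <= n ->
  (forall v, m <= v -> v < l - d -> exists2 j, j < l & h j = v) ->
  (forall j, j < l -> h j < l - d \/ h m <= h j) ->
  (forall i, l <= i -> i < r -> h i < h m) ->
  forall i, l <= i -> i < r -> h i = i - d.
Proof.
move=> ml mdl rn used before small i; elim/ltn_ind: i => i IH li ir.
have iN : i < n by lia.
have hi_small := small i li ir; have hi_ge := values_from_pivot (ltnW (leq_trans ml li)) iN.
have lo : i - d <= h i.
  rewrite leqNgt; apply/negP => lt.
  case: (ltnP (h i) (l - d)) => hv.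
  - have [j jl hj] := used _ hi_ge hv.
    by have := @h_inj j i ltac:(lia) iN hj; lia.
  - have := IH (h i + d) ltac:(lia) ltac:(lia) ltac:(lia) => e.
    by have := @h_inj (h i + d) i ltac:(lia) iN ltac:(lia); lia.
case: (ltngtP (h i) (i - d)) => [lt | gt | //]; first lia.
have [r' r'n hr'] := @h_surj (i - d) ltac:(lia).
case: (ltnP r' l) => [r'l | lr']; first by have := before r' r'l; lia.
case: (ltngtP r' i) => [r'i | ir' | e]; last by subst r'; lia.
- by have := IH r' r'i lr' ltac:(lia); lia.
- by case: (h_321 (leq_trans ml li) ir' r'n); lia.
Qed.

Lemma shift_before_peak t : t < n -> h t = n - 1 -> m < t ->
  forall i, m < i -> i < t -> h i = i - 1.
Proof.
move=> tn ht mt.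
have below_top : h m < h t.
  by have := h_range m_lt; have := @h_inj m t m_lt tn; lia.
apply: (@shift_segment m.+1 t 1); rewrite ?addn1 //; try lia.
- by move=> j /before_pivot_next; rewrite subn1.
- move=> i mi it; have iN := ltn_trans it tn.
  case: (ltngtP (h i) (h m)) => // [gt | e]; last by have := h_inj iN m_lt e; lia.
  by have := big_decreasing (big_late iN gt) it tn gt below_top; have := h_range iN; lia.
Qed.

Lemma shift_after_peak t r : t < n -> h t = n - 1 -> m.+1 < t -> r <= n ->
  (forall i, t < i -> i < r -> h i < h m) -> forall i, t < i -> i < r -> h i = i - 2.
Proof.
move=> tn ht mt rn small; have [m1n hm1] := after_pivot.
have shift1 := shift_before_peak tn ht (ltnW mt).
apply: (@shift_segment t.+1 r 2) => //; try lia.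
- move=> v mv vt; exists v.+1; first lia.
  case: (ltngtP m v) => [mv' | vm | <-]; [by rewrite shift1; lia | lia | exact: hm1].
- move=> j jt; case: (ltnP j m.+1) => [/before_pivot_next | mj]; first lia.
  case: (ltngtP j t) => [jt' | tj | ->]; first by rewrite shift1; lia.
  + by lia.
  + by rewrite ht; have := h_range m_lt; lia.
Qed.

Lemma shapeA : h m = n - 1 -> forall i, i < n -> h i = famA n m i.
Proof.
move=> top.
have shift : forall i, m < i -> i < n -> h i = i - 1.
  apply: (@shift_segment m.+1 n 1); rewrite ?addn1 //; try lia.
  - by move=> j /before_pivot_next; rewrite subn1.
  - by move=> i mi iN; have := h_range iN; have := @h_inj i m iN m_lt; lia.
move=> i iN; rewrite /famA; case: (ltngtP i m) => [im | mi | e].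
- exact: fixed_below.
- exact: shift.
- by rewrite e top.
Qed.

Lemma shapeB : h m = n - 2 ->
  exists2 t, m + 2 <= t <= n - 1 & forall i, i < n -> h i = famB n m t i.
Proof.
move=> pv; have [t tn ht] := @h_surj (n - 1) ltac:(lia).
have mt := big_late tn ltac:(lia).
have shift1 := shift_before_peak tn ht (ltnW mt).
have shift2 := shift_after_peak tn ht mt (leqnn n).
exists t; first lia.
move=> i iN; rewrite /famB; case: (ltngtP i m) => [im | mi | e].
- exact: fixed_below.
- case: (ltngtP i t) => [it | ti | e]; [exact: shift1 | | by rewrite e].
  apply: shift2 => // j tj jn.
  by have := h_range jn; have := @h_inj j m jn m_lt; have := @h_inj j t jn tn; lia.
- by rewrite e pv.
Qed.

(* If h m = n - 3, the values n - 1 and n - 2 come in this order after m + 1;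
   n - 2 must be last (else 321), and the rest shifts as in family B. *)
Lemma shapeC : h m = n - 3 ->
  exists2 t, m + 2 <= t <= n - 2 & forall i, i < n -> h i = famC n m t i.
Proof.
move=> pv; have [m1n hm1] := after_pivot.
have [t tn ht] := @h_surj (n - 1) ltac:(lia).
have [t' t'n ht'] := @h_surj (n - 2) ltac:(lia).
have mt := big_late tn ltac:(lia).
have tt' : t < t' := big_positions t'n tn ltac:(lia) ltac:(lia).
have t'_last : t' = n - 1.
  case: (ltngtP t' (n - 1)) => // [t'l | ]; last lia.
  have ln : n - 1 < n by lia.
  case: (h_321 tt' t'l ln).
  by have := h_range ln; have := @h_inj (n - 1) t ln tn; have := @h_inj (n - 1) t' ln t'n; lia.
subst t'.
have shift1 := shift_before_peak tn ht (ltnW mt).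
have shift2 := shift_after_peak tn ht mt (leq_subr 1 n).
exists t; first lia.
move=> i iN; rewrite /famC; case: (ltngtP i m) => [im | mi | e].
- exact: fixed_below.
- case: (ltngtP i t) => [it | ti | e]; [exact: shift1 | | by rewrite e].
  case: (ltngtP i (n - 1)) => [il | | e]; [ | lia | by rewrite e].
  apply: shift2 => // j tj jl; have jn : j < n by lia.
  have := h_range jn; have := @h_inj j m jn m_lt; have := @h_inj j t jn tn.
  by have := @h_inj j (n - 1) jn t'n; lia.
- by rewrite e pv.
Qed.

End Pivot.

Theorem classification : 0 < n -> exists x : code n, forall i, i < n -> h i = fam x i.
Proof.
move=> n_pos.
case: (boolP [exists i : 'I_n, h i != i]) => [moved | /existsPn fixed]; last first.
  have last_lt : n - 1 < n by lia.
  exists (inl (Ordinal last_lt)) => i iN /=.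
  have := fixed (Ordinal iN); rewrite negbK /famA /= => /eqP ->.
  by case: ifP => //; case: eqP => //; lia.
have some_moved : exists i, (i < n) && (h i != i).
  by case/existsP: moved => i hi; exists i; rewrite ltn_ord.
case: (ex_minnP some_moved) => m /andP [m_lt m_moved] m_min.
have fixed_below : forall i, i < m -> h i = i.
  move=> i im; apply/eqP; apply: contraT => hi.
  by have := m_min i; rewrite hi andbT => /(_ ltac:(lia)); lia.
have [top | [pv | pv]] : h m = n - 1 \/ h m = n - 2 \/ h m = n - 3.
  by have := pivot_large m_lt fixed_below m_moved; have := h_range m_lt; lia.
- by exists (inl (Ordinal m_lt)); exact: shapeA.
- have [t tb ht] := shapeB m_lt fixed_below m_moved pv.
  by have [x ex] := famB_code tb; exists x; rewrite ex.
- have [t tb ht] := shapeC m_lt fixed_below m_moved pv.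
  by have [x ex] := famC_code tb; exists x; rewrite ex.
Qed.

End Classification.

Lemma F_321_2134_image n :
  0 < n -> F_321_2134 n = [set perm_of_fun n (fam x) | x : code n].
Proof.
move=> n_pos; apply/setP => s; rewrite inE; apply/and3P/imsetP.
- case=> fish a321 a2134; have sF := perm_funE s.
  have [x hx] := classification (@perm_fun_range n s) (@perm_fun_inj n s) (@perm_fun_surj n s)
    ((avoid321P sF).1 a321) ((avoid2134P sF).1 a2134) ((fishburnP sF).1 fish) n_pos.
  have S := fam_shaped x; exists x => //; apply/permP => i; apply: val_inj.
  rewrite /= -(perm_of_funE (shaped_range S) (shaped_inj S)).
  by have := hx i (ltn_ord i); rewrite perm_funE.
- case=> y _ ->; have S := fam_shaped y.
  have sF := perm_of_funE (shaped_range S) (shaped_inj S).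
  split; [apply/(fishburnP sF) | apply/(avoid321P sF) | apply/(avoid2134P sF)].
  + exact: shaped_fishburn S.
  + exact: shaped_avoid321 S.
  + exact: shaped_avoid2134 S.
Qed.

Lemma perm_of_fam_inj n : injective (fun x : code n => perm_of_fun n (fam x)).
Proof.
move=> x y /permP exy; apply: fam_inj => i iN.
have Sx := fam_shaped x; have Sy := fam_shaped y.
rewrite (perm_of_funE (shaped_range Sx) (shaped_inj Sx) (Ordinal iN)).
by rewrite (perm_of_funE (shaped_range Sy) (shaped_inj Sy) (Ordinal iN)) exy.
Qed.

Lemma card_code n : #|{: code n}| = n + (n - 2) ^ 2.
Proof. by rewrite card_sum card_prod !card_ord. Qed.

Theorem mainTheorem7 (n : nat) : 2 <= n -> #|F_321_2134 n| = n ^ 2 + 4 - 3 * n.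
Proof.
move=> n2; rewrite F_321_2134_image ?card_imset; [|exact: perm_of_fam_inj | lia].
by rewrite card_code !expnS !expn0 !muln1; nia.
Qed.
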